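(* Let $\theta\in\mathbb R\setminus\mathbb Q$. Then $H^0(\mathcal A_\theta^{alg},{}_{-1}\mathcal A_\theta^{alg*})\cong\mathbb C^4$, and every class is $\mathbb Z_2$-invariant, so $H^0(\mathcal A_\theta^{alg},{}_{-1}\mathcal A_\theta^{alg*})^{\mathbb Z_2}\cong\mathbb C^4$. A basis is given by the four cocycles $\mathcal D_{a,b}$, $a,b\in\{0,1\}$, where $\mathcal D_{a,b}$ is the element $\sum\varphi_{n,m}U_1^nU_2^m$ of ${}_{-1}\mathcal A_\theta^{alg*}$ supported on $(n,m)\equiv(a,b)\pmod 2$ satisfying $U_1^{-1}\varphi=\varphi U_1$, $U_2^{-1}\varphi=\varphi U_2$ and $\varphi_{a,b}=1$.
   Context: Let $\lambda=e^{2\pi i\theta}$. $\mathcal A_\theta^{alg}$ is the complex algebra of finite linear combinations $\sum a_{n,m}U_1^nU_2^m$ generated by invertible $U_1,U_2$ with $U_2U_1=\lambda U_1U_2$. Its linear dual $\mathcal A_\theta^{alg*}$ is identified with the space of formal (arbitrary, not necessarily finitely supported) series $\sum_{(n,m)\in\mathbb Z^2}\varphi_{n,m}U_1^nU_2^m$ with the standard bimodule structure. $\mathbb Z_2$ acts on $\mathcal A_\theta^{alg}$ (and hence on $\mathcal A_\theta^{alg*}$ and on the cohomology) by the involution $\sigma(U_j)=U_j^{-1}$. ${}_{-1}\mathcal A_\theta^{alg*}$ is $\mathcal A_\theta^{alg*}$ with the bimodule structure twisted on the left: $\alpha\cdot a=\sigma(\alpha)a$, $a\cdot\alpha=a\alpha$.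 $H^\bullet(A,M)$ is Hochschild cohomology, and $(\cdot)^{\mathbb Z_2}$ denotes the invariants of the induced $\mathbb Z_2$-action. *)

From Stdlib Require Import Reals ZArith List.
Open Scope R_scope.

Definition Cx : Type := (R * R)%type.
Definition C0 : Cx := (0, 0).
Definition C1 : Cx := (1, 0).
Definition Cadd (x y : Cx) : Cx := (fst x + fst y, snd x + snd y).
Definition Cmul (x y : Cx) : Cx :=
  (fst x * fst y - snd x * snd y, fst x * snd y + snd x * fst y).

Definition lampow (theta : R) (k : Z) : Cx :=
  (cos (2 * PI * theta * IZR k), sin (2 * PI * theta * IZR k)).

Definition irrational (theta : R) : Prop :=
  forall p q : Z, q <> 0%Z -> theta <> IZR p / IZR q.

(* An element is a finite list of terms (p, q, c) meaning c * U1^p U2^q. *)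
Definition Aalg : Type := list (Z * Z * Cx).

Definition series : Type := Z -> Z -> Cx.

Definition ser0 : series := fun _ _ => C0.
Definition ser_add (f g : series) : series := fun n m => Cadd (f n m) (g n m).
Definition ser_scale (c : Cx) (f : series) : series := fun n m => Cmul c (f n m).

(* Using U2 U1 = lambda U1 U2, i.e. U2^m U1^p = lambda^{mp} U1^p U2^m:
   (U1^p U2^q) * (sum phi_{n,m} U1^n U2^m) has coefficient at (N,M)
     lambda^{q (N-p)} phi_{N-p, M-q}. *)
Definition mono_left (theta : R) (p q : Z) (phi : series) : series :=
  fun N M => Cmul (lampow theta (q * (N - p))) (phi (N - p)%Z (M - q)%Z).

(* (sum phi_{n,m} U1^n U2^m) * (U1^p U2^q) has coefficient at (N,M)
     lambda^{(M-q) p} phi_{N-p, M-q}. *)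
Definition mono_right (theta : R) (p q : Z) (phi : series) : series :=
  fun N M => Cmul (lampow theta ((M - q) * p)) (phi (N - p)%Z (M - q)%Z).

Definition act_left (theta : R) (a : Aalg) (phi : series) : series :=
  fold_right (fun t acc =>
    let '(p, q, c) := t in ser_add (ser_scale c (mono_left theta p q phi)) acc)
    ser0 a.
Definition act_right (theta : R) (phi : series) (a : Aalg) : series :=
  fold_right (fun t acc =>
    let '(p, q, c) := t in ser_add (ser_scale c (mono_right theta p q phi)) acc)
    ser0 a.

Definition sigmaA (a : Aalg) : Aalg :=
  map (fun t => let '(p, q, c) := t in ((- p)%Z, (- q)%Z, c)) a.

Definition sigma_ser (phi : series) : series := fun n m => phi (- n)%Z (- m)%Z.

(* Twisted bimodule _{-1}A_theta^alg*:  alpha . phi = sigma(alpha) phi,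
   phi . alpha = phi alpha. *)
Definition tw_left (theta : R) (a : Aalg) (phi : series) : series :=
  act_left theta (sigmaA a) phi.
Definition tw_right (theta : R) (phi : series) (a : Aalg) : series :=
  act_right theta phi a.

(* Hochschild 0-cocycles (= H^0, since there are no 0-coboundaries):
   H^0(A, M) = { phi in M | alpha . phi = phi . alpha for all alpha in A }. *)
Definition H0 (theta : R) (phi : series) : Prop :=
  forall (a : Aalg) (n m : Z), tw_left theta a phi n m = tw_right theta phi a n m.

Definition monoA (p q : Z) : Aalg := (p, q, C1) :: nil.

Definition supported_on_parity (a b : bool) (phi : series) : Prop :=
  forall n m : Z, (Z.odd n <> a \/ Z.odd m <> b) -> phi n m = C0.

Definition is_D (theta : R) (a b : bool) (phi : series) : Prop :=
  supported_on_parity a b phi /\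
  (forall n m, act_left theta (monoA (-1) 0) phi n m = act_right theta phi (monoA 1 0) n m) /\
  (forall n m, act_left theta (monoA 0 (-1)) phi n m = act_right theta phi (monoA 0 1) n m) /\
  phi (Z.b2z a) (Z.b2z b) = C1.

Definition comb4 (c : bool -> bool -> Cx) (D : bool -> bool -> series) : series :=
  fun n m =>
    Cadd (Cadd (Cmul (c false false) (D false false n m))
               (Cmul (c false true)  (D false true  n m)))
         (Cadd (Cmul (c true false)  (D true false  n m))
               (Cmul (c true true)   (D true true   n m))).

(* A 0-cocycle is a series [phi] with [sigma(alpha) phi = phi alpha] for all
   [alpha]; testing this on [U1] and [U2] shows that shifting an index by 2
   multiplies a coefficient by a power of [lambda]:
   [phi(n+2,m) = lambda^m phi(n,m)] and [phi(n,m+2) = lambda^n phi(n,m)].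
   Hence [phi] is determined by its four values at [(a,b) in {0,1}^2], and
   [phi(n,m) = lambda^((nm-ab)/2) phi(a,b)] for [(n,m) = (a,b) mod 2].  The
   four series [D_{a,b}] given by this formula are cocycles, because the
   exponent [(nm-ab)/2] changes by exactly [pm + qn] when [(n,m)] is moved by
   [(p,q)] to [(n+p,m+q)] instead of [(n-p,m-q)].  The formula is also
   invariant under [(n,m) |-> (-n,-m)], which gives the [Z_2]-invariance.
   None of this uses the irrationality of [theta]. *)
From Pilot Require Import Defs.
From Stdlib Require Import Reals ZArith List Lia Bool.
Open Scope R_scope.

Lemma Cmul_assoc x y z : Cmul x (Cmul y z) = Cmul (Cmul x y) z.
Proof. destruct x, y, z; unfold Cmul; simpl; f_equal; ring. Qed.

Lemma Cmul_comm x y : Cmul x y = Cmul y x.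
Proof. destruct x, y; unfold Cmul; simpl; f_equal; ring. Qed.

Lemma Cmul_1l x : Cmul Defs.C1 x = x.
Proof. destruct x; unfold Cmul, Defs.C1; simpl; f_equal; ring. Qed.

Lemma Cmul_1r x : Cmul x Defs.C1 = x.
Proof. rewrite Cmul_comm; apply Cmul_1l. Qed.

Lemma Cmul_0r x : Cmul x Defs.C0 = Defs.C0.
Proof. destruct x; unfold Cmul, Defs.C0; simpl; f_equal; ring. Qed.

Lemma Cadd_0l x : Cadd Defs.C0 x = x.
Proof. destruct x; unfold Cadd, Defs.C0; simpl; f_equal; ring. Qed.

Lemma Cadd_0r x : Cadd x Defs.C0 = x.
Proof. destruct x; unfold Cadd, Defs.C0; simpl; f_equal; ring. Qed.

Lemma lampow_add t k l : Cmul (lampow t k) (lampow t l) = lampow t (k + l).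
Proof.
  unfold lampow, Cmul; simpl. rewrite plus_IZR, Rmult_plus_distr_l.
  rewrite cos_plus, sin_plus. f_equal; ring.
Qed.

Lemma lampow_0 t : lampow t 0 = Defs.C1.
Proof. unfold lampow, Defs.C1; simpl. rewrite Rmult_0_r, cos_0, sin_0. reflexivity. Qed.

Lemma act_left_monoA t p q phi n m :
  act_left t (monoA p q) phi n m = mono_left t p q phi n m.
Proof. unfold act_left, monoA, ser_add, ser_scale, ser0; simpl. now rewrite Cadd_0r, Cmul_1l. Qed.

Lemma act_right_monoA t p q phi n m :
  act_right t phi (monoA p q) n m = mono_right t p q phi n m.
Proof. unfold act_right, monoA, ser_add, ser_scale, ser0; simpl. now rewrite Cadd_0r, Cmul_1l. Qed.

Definition twisted_periodic (t : R) (phi : series) : Prop :=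
  (forall n m, phi (n + 2)%Z m = Cmul (lampow t m) (phi n m)) /\
  (forall n m, phi n (m + 2)%Z = Cmul (lampow t n) (phi n m)).

Lemma twisted_periodic_of_generators t phi :
  (forall n m, act_left t (monoA (-1) 0) phi n m = act_right t phi (monoA 1 0) n m) ->
  (forall n m, act_left t (monoA 0 (-1)) phi n m = act_right t phi (monoA 0 1) n m) ->
  twisted_periodic t phi.
Proof.
  intros H1 H2; split; intros n m.
  - specialize (H1 (n + 1)%Z m).
    rewrite act_left_monoA, act_right_monoA in H1; unfold mono_left, mono_right in H1.
    replace (n + 1 - -1)%Z with (n + 2)%Z in H1 by ring.
    replace (n + 1 - 1)%Z with n in H1 by ring.
    replace (0 * (n + 2))%Z with 0%Z in H1 by ring.
    rewrite Z.sub_0_r, Z.mul_1_r, lampow_0, Cmul_1l in H1. exact H1.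
  - specialize (H2 n (m + 1)%Z).
    rewrite act_left_monoA, act_right_monoA in H2; unfold mono_left, mono_right in H2.
    replace (m + 1 - -1)%Z with (m + 2)%Z in H2 by ring.
    replace (m + 1 - 1)%Z with m in H2 by ring.
    rewrite Z.sub_0_r, Z.mul_0_r, lampow_0, Cmul_1l in H2.
    rewrite <- H2, Cmul_assoc, lampow_add.
    replace (n + -1 * n)%Z with 0%Z by ring.
    now rewrite lampow_0, Cmul_1l.
Qed.

Lemma H0_twisted_periodic t phi : H0 t phi -> twisted_periodic t phi.
Proof.
  intros H; apply twisted_periodic_of_generators; intros n m.
  - exact (H (monoA 1 0) n m).
  - exact (H (monoA 0 1) n m).
Qed.

Definition Dexponent (a b : bool) (n m : Z) : Z :=
  ((n * m - Z.b2z a * Z.b2z b) / 2)%Z.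

Lemma Dexponent_shiftl a b n m : Dexponent a b (n + 2) m = (m + Dexponent a b n m)%Z.
Proof. unfold Dexponent. rewrite <- Z.div_add_l by lia. f_equal; ring. Qed.

Lemma Dexponent_shiftr a b n m : Dexponent a b n (m + 2) = (n + Dexponent a b n m)%Z.
Proof. unfold Dexponent. rewrite <- Z.div_add_l by lia. f_equal; ring. Qed.

Lemma Dexponent_base a b : Dexponent a b (Z.b2z a) (Z.b2z b) = 0%Z.
Proof. unfold Dexponent. now rewrite Z.sub_diag. Qed.

Lemma Dexponent_opp a b n m : Dexponent a b (- n)%Z (- m)%Z = Dexponent a b n m.
Proof. unfold Dexponent. now rewrite Z.mul_opp_opp. Qed.

Lemma Dexponent_translate a b p q n m :
  Dexponent a b (n + p) (m + q) = (p * m + q * n + Dexponent a b (n - p) (m - q))%Z.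
Proof.
  unfold Dexponent.
  replace ((n + p) * (m + q) - Z.b2z a * Z.b2z b)%Z
    with ((p * m + q * n) * 2 + ((n - p) * (m - q) - Z.b2z a * Z.b2z b))%Z by ring.
  now rewrite Z.div_add_l by lia.
Qed.

Definition Dseries (t : R) (a b : bool) : series := fun n m =>
  if eqb (Z.odd n) a && eqb (Z.odd m) b then lampow t (Dexponent a b n m) else Defs.C0.

Lemma Dseries_off_parity t a b n m :
  Z.odd n <> a \/ Z.odd m <> b -> Dseries t a b n m = Defs.C0.
Proof.
  unfold Dseries; intros [Hn | Hm].
  - now destruct (eqb_spec (Z.odd n) a).
  - destruct (eqb_spec (Z.odd m) b); [contradiction | now rewrite andb_false_r].
Qed.

Lemma odd_b2z a : Z.odd (Z.b2z a) = a.
Proof. now destruct a. Qed.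

Lemma Dseries_base t a b a' b' :
  Dseries t a' b' (Z.b2z a) (Z.b2z b) = if eqb a a' && eqb b b' then Defs.C1 else Defs.C0.
Proof.
  unfold Dseries. rewrite !odd_b2z.
  destruct (eqb_spec a a'), (eqb_spec b b'); subst; simpl; try reflexivity.
  now rewrite Dexponent_base, lampow_0.
Qed.

Lemma Dseries_opp t a b n m : Dseries t a b (- n)%Z (- m)%Z = Dseries t a b n m.
Proof. unfold Dseries. now rewrite !Z.odd_opp, Dexponent_opp. Qed.

Lemma odd_sub_opp x p : Z.odd (x - - p) = Z.odd (x - p).
Proof. replace (x - - p)%Z with (x - p + 2 * p)%Z by ring. apply Z.odd_add_mul_2. Qed.

Lemma Dseries_mono_twisted t a b p q :
  forall n m, mono_left t (- p) (- q) (Dseries t a b) n m = mono_right t p q (Dseries t a b) n m.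
Proof.
  intros n m. unfold mono_left, mono_right, Dseries. rewrite !odd_sub_opp.
  destruct (eqb (Z.odd (n - p)) a && eqb (Z.odd (m - q)) b).
  - rewrite !Z.sub_opp_r, Dexponent_translate, !lampow_add. f_equal; ring.
  - now rewrite !Cmul_0r.
Qed.

Lemma H0_of_monomials t phi :
  (forall p q n m, mono_left t (- p) (- q) phi n m = mono_right t p q phi n m) ->
  H0 t phi.
Proof.
  intros Hmono alpha n m. unfold tw_left, tw_right, act_left, act_right, sigmaA.
  induction alpha as [| [[p q] c] alpha IH]; [reflexivity |].
  exact (f_equal2 Cadd (f_equal (Cmul c) (Hmono p q n m)) IH).
Qed.

Lemma Dseries_H0 t a b : H0 t (Dseries t a b).
Proof. apply H0_of_monomials; intros p q; apply Dseries_mono_twisted. Qed.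

Lemma Zperiodic2 (f : Z -> Cx) : (forall x, f (x + 2)%Z = f x) -> forall k x, f (2 * k + x)%Z = f x.
Proof.
  intros Hf k x. induction k using Z.peano_ind.
  - reflexivity.
  - rewrite <- IHk, <- (Hf (2 * k + x)%Z). f_equal; lia.
  - rewrite <- IHk, <- (Hf (2 * Z.pred k + x)%Z). f_equal; lia.
Qed.

Lemma twisted_periodic_normal_form t phi : twisted_periodic t phi ->
  forall n m, phi n m = Cmul (phi (Z.b2z (Z.odd n)) (Z.b2z (Z.odd m)))
                             (Dseries t (Z.odd n) (Z.odd m) n m).
Proof.
  intros [Hn Hm] n m. set (a := Z.odd n); set (b := Z.odd m).
  (* [g] untwists [phi] on the parity class of [(n,m)]: it is 2-periodic there. *)
  set (g := fun x y => Cmul (lampow t (- Dexponent a b x y)) (phi x y)).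
  assert (g_periodicl : forall y x, g (x + 2)%Z y = g x y).
  { intros y x; unfold g. rewrite Hn, Cmul_assoc, lampow_add, Dexponent_shiftl.
    f_equal; f_equal; ring. }
  assert (g_periodicr : forall x y, g x (y + 2)%Z = g x y).
  { intros x y; unfold g. rewrite Hm, Cmul_assoc, lampow_add, Dexponent_shiftr.
    f_equal; f_equal; ring. }
  assert (g_base : g n m = phi (Z.b2z a) (Z.b2z b)).
  { rewrite (Z.div2_odd n), (Z.div2_odd m). fold a b.
    rewrite (Zperiodic2 (fun x => g x _) (g_periodicl _)).
    rewrite (Zperiodic2 (fun y => g _ y) (g_periodicr _)).
    unfold g. rewrite Dexponent_base, lampow_0, Cmul_1l. reflexivity. }
  unfold Dseries; rewrite !eqb_reflx; simpl.
  rewrite <- g_base; unfold g.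
  rewrite <- Cmul_assoc, (Cmul_comm (phi n m)), Cmul_assoc, lampow_add, Z.add_opp_diag_l.
  rewrite lampow_0, Cmul_1l. reflexivity.
Qed.

Lemma Dseries_is_D t a b : is_D t a b (Dseries t a b).
Proof.
  split; [| split; [| split]].
  - intros n m; apply Dseries_off_parity.
  - intros n m. exact (Dseries_H0 t a b (monoA 1 0) n m).
  - intros n m. exact (Dseries_H0 t a b (monoA 0 1) n m).
  - now rewrite Dseries_base, !eqb_reflx.
Qed.

Lemma is_D_unique t a b phi : is_D t a b phi -> forall n m, phi n m = Dseries t a b n m.
Proof.
  intros [Hsupp [H1 [H2 Hbase]]] n m.
  destruct (bool_dec (Z.odd n) a) as [<- | Hn]; [destruct (bool_dec (Z.odd m) b) as [<- | Hm] |].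
  - rewrite (twisted_periodic_normal_form t phi (twisted_periodic_of_generators t phi H1 H2)).
    now rewrite Hbase, Cmul_1l.
  - now rewrite Hsupp, Dseries_off_parity by auto.
  - now rewrite Hsupp, Dseries_off_parity by auto.
Qed.

Definition base_values (phi : series) (a b : bool) : Cx := phi (Z.b2z a) (Z.b2z b).

Lemma twisted_periodic_expansion t phi : twisted_periodic t phi ->
  forall n m, phi n m = comb4 (base_values phi) (Dseries t) n m.
Proof.
  intros Hphi n m. rewrite (twisted_periodic_normal_form t phi Hphi n m).
  unfold comb4, base_values, Dseries.
  destruct (Z.odd n), (Z.odd m); simpl; now rewrite ?Cmul_0r, ?Cadd_0l, ?Cadd_0r.
Qed.

Lemma comb4_Dseries_base t c a b : comb4 c (Dseries t) (Z.b2z a) (Z.b2z b) = c a b.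
Proof.
  unfold comb4; rewrite !Dseries_base.
  destruct a, b; simpl; now rewrite ?Cmul_0r, ?Cmul_1r, ?Cadd_0l, ?Cadd_0r.
Qed.

Lemma twisted_periodic_sigma_invariant t phi : twisted_periodic t phi ->
  forall n m, sigma_ser phi n m = phi n m.
Proof.
  intros Hphi n m; unfold sigma_ser.
  rewrite (twisted_periodic_normal_form t phi Hphi (- n)), (twisted_periodic_normal_form t phi Hphi n).
  now rewrite !Z.odd_opp, Dseries_opp.
Qed.

Theorem mainTheorem5 (theta : R) (Htheta : irrational theta) :
  exists D : bool -> bool -> series,
    (forall a b, is_D theta a b (D a b)) /\
    (forall a b psi, is_D theta a b psi -> forall n m, psi n m = D a b n m) /\
    (forall a b, H0 theta (D a b)) /\
    (forall psi, H0 theta psi ->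
       exists c : bool -> bool -> Cx,
         (forall n m, psi n m = comb4 c D n m) /\
         (forall c' : bool -> bool -> Cx,
            (forall n m, psi n m = comb4 c' D n m) -> forall a b, c' a b = c a b)) /\
    (forall psi, H0 theta psi -> forall n m, sigma_ser psi n m = psi n m).
Proof.
  exists (Dseries theta).
  split; [apply Dseries_is_D |].
  split; [apply is_D_unique |].
  split; [apply Dseries_H0 |].
  split.
  - intros psi Hpsi. pose proof (H0_twisted_periodic theta psi Hpsi) as Hper.
    exists (base_values psi). split; [exact (twisted_periodic_expansion theta psi Hper) |].
    intros c' Hc' a b. unfold base_values.
    now rewrite Hc', comb4_Dseries_base.
  - intros psi Hpsi.
    exact (twisted_periodic_sigma_invariant theta psi (H0_twisted_periodic theta psi Hpsi)).
Qed.
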